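(* Let $(\mathbb{P},\le,f)$ be a forcing property for $\mathcal{L}_A$. For all $p\in\mathbb{P}$ and sentences of $\mathcal{L}_A(C)$ of the indicated forms: $F^w_p(\neg\varphi)=1-\inf_{q\le p}F^w_q(\varphi)$; $F^w_p(\tfrac12\varphi)=\tfrac12F^w_p(\varphi)$; $F^w_p(\varphi\dotplus\psi)=\sup_{q\le p}\inf_{q'\le q}\min\big(F^w_{q'}(\varphi)+F^w_{q'}(\psi),1\big)$; $F^w_p(\bigwedge\Phi)=\sup_{q\le p}\inf_{q'\le q}\inf_{\varphi\in\Phi}F^w_{q'}(\varphi)$; $F^w_p(\inf_x\varphi(x))=\sup_{q\le p}\inf_{q'\le q}\inf_{c\in C}F^w_{q'}(\varphi(c))$.
   Context: $\mathcal{L}$ is a countable continuous signature; formulas of $\mathcal{L}_{\omega_1,\omega}$ are built from atomic formulas using $\neg$, $\tfrac12$, $\dotplus$, countable conjunctions $\bigwedge$ and $\inf_x$. $\mathcal{L}_A$ is a countable fragment, $C=\{c_i:i<\omega\}$ new constants, $\mathcal{L}_A(C)$ the smallest countable fragment of $\mathcal{L}_{\omega_1,\omega}(C)$ containing $\mathcal{L}_A$, $\mathcal{L}_A^{as}(C)$ its atomic sentences, $\mathcal{T}(C)$ closed terms. A forcing property $(\mathbb{P},\le,f)$: poset with $f_p\colon\mathcal{L}_A^{as}(C)\to[0,1]$ such that (1) $p\le q\Rightarrow f_p\le f_q$; (2) for every $p$, $\varepsilon>0$, $\tau,\sigma\in\mathcal{T}(C)$, atomic $\varphi(x)$ there are $q\le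 p$, $c\in C$ with $f_q(d(\tau,c))<\varepsilon$, $f_q(d(\tau,\sigma))<f_p(d(\sigma,\tau))+\varepsilon$, and if $f_p(d(\tau,\sigma))<\delta_{\varphi,x}(\varepsilon)$ then $f_q(\varphi(\sigma))<f_p(\varphi(\tau))+\varepsilon$. $F_p$ on sentences: $f_p$ on atomics; $F_p(\neg\varphi)=1-\inf_{q\le p}F_q(\varphi)$; $F_p(\tfrac12\varphi)=\tfrac12F_p(\varphi)$; $F_p(\varphi\dotplus\psi)=\min(F_p(\varphi)+F_p(\psi),1)$; $F_p(\bigwedge\Phi)=\inf_{\varphi\in\Phi}F_p(\varphi)$; $F_p(\inf_x\varphi)=\inf_{c\in C}F_p(\varphi(c))$. Weak forcing: $F^w_p(\varphi)=\sup_{q\le p}\inf_{q'\le q}F_{q'}(\varphi)$. *)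

From HB Require Import structures.
From mathcomp Require Import all_boot all_order all_algebra.
From mathcomp Require Import boolp classical_sets reals.
Set Implicit Arguments. Unset Strict Implicit. Unset Printing Implicit Defensive.
Import Order.TTheory GRing.Theory Num.Theory.
Local Open Scope ring_scope.
Local Open Scope classical_set_scope.

(* A countable continuous signature: function and predicate symbols with
   arities.  Constants of L are 0-ary function symbols.  The new constants
   C = {c_i : i < omega} are represented by [Cst i]. *)
Record sig := Sig {
  fsym : countType; fari : fsym -> nat;
  psym : countType; pari : psym -> nat }.

Section Syntax.
Variable L : sig.

Inductive term : Type :=
| Var : nat -> term
| Cst : nat -> term
| App : forall f : fsym L, ('I_(fari f) -> term) -> term.

Inductive atomic : Type :=
| AtP : forall P : psym L, ('I_(pari P) -> term) -> atomic
| AtD : term -> term -> atomic.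

Inductive formula : Type :=
| FAtom : atomic -> formula
| FNeg : formula -> formula
| FHalf : formula -> formula
| FDplus : formula -> formula -> formula
| FConj : (nat -> formula) -> formula
| FInf : nat -> formula -> formula.

Fixpoint t_fv (t : term) (x : nat) : Prop :=
  match t with
  | Var n => n = x
  | Cst _ => False
  | App f a => exists i, t_fv (a i) x
  end.

Definition a_fv (a : atomic) (x : nat) : Prop :=
  match a with
  | AtP P ts => exists i, t_fv (ts i) x
  | AtD t1 t2 => t_fv t1 x \/ t_fv t2 x
  end.

Fixpoint f_fv (phi : formula) (x : nat) : Prop :=
  match phi with
  | FAtom a => a_fv a x
  | FNeg psi => f_fv psi x
  | FHalf psi => f_fv psi x
  | FDplus psi chi => f_fv psi x \/ f_fv chi x
  | FConj Phi => exists n, f_fv (Phi n) x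
  | FInf y psi => y <> x /\ f_fv psi x
  end.

Definition closed_term (t : term) : Prop := forall x, ~ t_fv t x.
Definition atomic_sentence (a : atomic) : Prop := forall x, ~ a_fv a x.
Definition sentence (phi : formula) : Prop := forall x, ~ f_fv phi x.

Fixpoint t_subst (x : nat) (s : term) (t : term) : term :=
  match t with
  | Var n => if n == x then s else Var n
  | Cst i => Cst i
  | App f a => App (fun i => t_subst x s (a i))
  end.

Definition a_subst (x : nat) (s : term) (a : atomic) : atomic :=
  match a with
  | AtP P ts => AtP (fun i => t_subst x s (ts i))
  | AtD t1 t2 => AtD (t_subst x s t1) (t_subst x s t2)
  end.

(* substitution of a closed term (only used with closed terms, so no capture) *)
Fixpoint f_subst (x : nat) (s : term) (phi : formula) : formula :=
  match phi with
  | FAtom a => FAtom (a_subst x s a)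
  | FNeg psi => FNeg (f_subst x s psi)
  | FHalf psi => FHalf (f_subst x s psi)
  | FDplus psi chi => FDplus (f_subst x s psi) (f_subst x s chi)
  | FConj Phi => FConj (fun n => f_subst x s (Phi n))
  | FInf y psi => if y == x then FInf y psi else FInf y (f_subst x s psi)
  end.

Fixpoint t_subst_env (e : nat -> nat) (t : term) : term :=
  match t with
  | Var n => Cst (e n)
  | Cst i => Cst i
  | App f a => App (fun i => t_subst_env e (a i))
  end.

Definition a_subst_env (e : nat -> nat) (a : atomic) : atomic :=
  match a with
  | AtP P ts => AtP (fun i => t_subst_env e (ts i))
  | AtD t1 t2 => AtD (t_subst_env e t1) (t_subst_env e t2)
  end.

Definition upd (e : nat -> nat) (x c : nat) : nat -> nat :=
  fun n => if n == x then c else e n.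

End Syntax.

Arguments Var {L}. Arguments Cst {L}.

(* A continuous signature: the signature together with the uniform
   continuity moduli delta_{phi,x} of its atomic formulas. *)
Record csig (R : realType) := CSig {
  csig_sig :> sig;
  delta : atomic csig_sig -> nat -> R -> R;
  delta_pos : forall a x e, 0 < e -> 0 < delta a x e }.

Record forcing (R : realType) (L : csig R) := Forcing {
  cond : Type;
  le : cond -> cond -> Prop;
  le_refl : forall p, le p p;
  le_trans : forall p q r, le p q -> le q r -> le p r;
  le_anti : forall p q, le p q -> le q p -> p = q;
  fval : cond -> atomic L -> R;
  fval_range : forall p a, atomic_sentence a -> 0 <= fval p a <= 1;
  fval_mono : forall p q a, atomic_sentence a -> le p q -> fval p a <= fval q a;
  fval_dense : forall p (eps : R) (tau sigma : term L) (phi : atomic L) (x : nat),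
    0 < eps -> closed_term tau -> closed_term sigma ->
    (forall y, a_fv phi y -> y = x) ->
    exists q c, le q p /\
      fval q (AtD tau (Cst c)) < eps /\
      fval q (AtD tau sigma) < fval p (AtD sigma tau) + eps /\
      (fval p (AtD tau sigma) < delta phi x eps ->
       fval q (a_subst x sigma phi) < fval p (a_subst x tau phi) + eps) }.

Section Forcing.
Variables (R : realType) (L : csig R) (FP : forcing L).

Definition below (p : cond FP) : set (cond FP) := [set q | le q p].

(* F_p, defined with an environment assigning constants to variables;
   on sentences the environment is irrelevant. *)
Fixpoint Fenv (phi : formula L) : (nat -> nat) -> cond FP -> R :=
  match phi with
  | FAtom a => fun e p => fval p (a_subst_env e a)
  | FNeg psi => fun e p => 1 - inf [set Fenv psi e q | q in below p]
  | FHalf psi => fun e p => Fenv psi e p / 2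
  | FDplus psi chi => fun e p => Num.min (Fenv psi e p + Fenv chi e p) 1
  | FConj Phi => fun e p => inf [set Fenv (Phi n) e p | n in [set: nat]]
  | FInf x psi => fun e p => inf [set Fenv psi (upd e x c) p | c in [set: nat]]
  end.

Definition F (p : cond FP) (phi : formula L) : R := Fenv phi (fun _ => 0%N) p.

Definition Fw (p : cond FP) (phi : formula L) : R :=
  sup [set inf [set F q' phi | q' in below q] | q in below p].

End Forcing.

(* The maps x |-> 1 - x and x |-> x/2 commute
   with the sup/inf defining F^w (the first swapping them), which gives the
   clauses for negation and 1/2.  For the other connectives one shows that
   inside inf_{q'<=q} the strong values may be replaced by weak ones: F^w <= F
   gives one inequality, and a lower bound for F below q' is one for F^w at q'.
   For a sum the bound has to be shared between the two summands, which uses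
   that F decreases along extensions. *)

From Pilot Require Import Defs.
From HB Require Import structures.
From mathcomp Require Import all_boot all_order all_algebra.
From mathcomp Require Import boolp classical_sets reals.
From mathcomp Require Import lra.
Set Implicit Arguments. Unset Strict Implicit. Unset Printing Implicit Defensive.
Import Order.TTheory GRing.Theory Num.Theory.
Local Open Scope ring_scope.
Local Open Scope classical_set_scope.

Section image_sup_inf.
Context {R : realType} {T : Type}.
Implicit Types (A : set T) (g : T -> R).

Lemma has_ubound_image A g (b : R) : (forall t, A t -> g t <= b) ->
  has_ubound [set g t | t in A].
Proof. by move=> gb; exists b => _ [t At <-]; exact: gb. Qed.

Lemma has_lbound_image A g (a : R) : (forall t, A t -> a <= g t) ->
  has_lbound [set g t | t in A].
Proof. by move=> ag; exists a => _ [t At <-]; exact: ag. Qed.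

Lemma image_le_sup A g t : has_ubound [set g t | t in A] -> A t ->
  g t <= sup [set g t | t in A].
Proof. by move=> ubg At; apply: ub_le_sup ubg _ _; exists t. Qed.

Lemma ge_sup_image A g (a : R) : A !=set0 -> (forall t, A t -> g t <= a) ->
  sup [set g t | t in A] <= a.
Proof.
move=> [t0 At0] ga; apply: ge_sup; first by exists (g t0), t0.
by move=> _ [t At <-]; exact: ga.
Qed.

Lemma inf_le_image A g t : has_lbound [set g t | t in A] -> A t ->
  inf [set g t | t in A] <= g t.
Proof. by move=> lbg At; apply: ge_inf lbg _ _; exists t. Qed.

Lemma le_inf_image A g (a : R) : A !=set0 -> (forall t, A t -> a <= g t) ->
  a <= inf [set g t | t in A].
Proof.
move=> [t0 At0] ag; apply: lb_le_inf; first by exists (g t0), t0.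
by move=> _ [t At <-]; exact: ag.
Qed.

Lemma sup_image_itv A g (a b : R) : A !=set0 -> (forall t, a <= g t <= b) ->
  a <= sup [set g t | t in A] <= b.
Proof.
move=> [t0 At0] gab.
have ag t : a <= g t by have /andP[] := gab t.
have gb t : g t <= b by have /andP[] := gab t.
apply/andP; split; last by apply: ge_sup_image => [|t _]; [exists t0 | exact: gb].
exact: le_trans (ag t0) (image_le_sup (has_ubound_image (fun t _ => gb t)) At0).
Qed.

Lemma inf_image_itv A g (a b : R) : A !=set0 -> (forall t, a <= g t <= b) ->
  a <= inf [set g t | t in A] <= b.
Proof.
move=> [t0 At0] gab.
have ag t : a <= g t by have /andP[] := gab t.
have gb t : g t <= b by have /andP[] := gab t.
apply/andP; split; first by apply: le_inf_image => [|t _]; [exists t0 | exact: ag].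
exact: le_trans (inf_le_image (has_lbound_image (fun t _ => ag t)) At0) (gb t0).
Qed.

Lemma inf_image_subr A g (c : R) : A !=set0 -> has_ubound [set g t | t in A] ->
  inf [set c - g t | t in A] = c - sup [set g t | t in A].
Proof.
move=> A0 [b ubb].
have lbc : has_lbound [set c - g t | t in A].
  by exists (c - b) => _ [t At <-]; have := ubb (g t) (ex_intro2 _ _ t At erefl); lra.
apply/le_anti/andP; split.
  suff : sup [set g t | t in A] <= c - inf [set c - g t | t in A] by lra.
  by apply: ge_sup_image => // t At; have := inf_le_image lbc At; lra.
apply: le_inf_image => // t At; have := image_le_sup (ex_intro _ b ubb) At; lra.
Qed.

Lemma sup_image_subr A g (c : R) : A !=set0 -> has_lbound [set g t | t in A] ->
  sup [set c - g t | t in A] = c - inf [set g t | t in A].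
Proof.
move=> A0 [a lba].
have ubc : has_ubound [set c - g t | t in A].
  by exists (c - a) => _ [t At <-]; have := lba (g t) (ex_intro2 _ _ t At erefl); lra.
apply/le_anti/andP; split.
  by apply: ge_sup_image => // t At; have := inf_le_image (ex_intro _ a lba) At; lra.
suff : c - sup [set c - g t | t in A] <= inf [set g t | t in A] by lra.
by apply: le_inf_image => // t At; have := image_le_sup ubc At; lra.
Qed.

Lemma sup_image_mulr A g (k : R) : 0 < k -> A !=set0 ->
  has_ubound [set g t | t in A] ->
  sup [set g t * k | t in A] = sup [set g t | t in A] * k.
Proof.
move=> k_gt0 A0 [b ubb].
have ubk : has_ubound [set g t * k | t in A].
  exists (b * k) => _ [t At <-]; rewrite ler_pM2r //.
  exact: ubb (ex_intro2 _ _ t At erefl).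
apply/le_anti/andP; split.
  apply: ge_sup_image => // t At; rewrite ler_pM2r //.
  exact: image_le_sup (ex_intro _ b ubb) At.
rewrite -ler_pdivlMr //; apply: ge_sup_image => // t At.
by rewrite ler_pdivlMr //; exact: image_le_sup ubk At.
Qed.

Lemma inf_image_mulr A g (k : R) : 0 < k -> A !=set0 ->
  has_lbound [set g t | t in A] ->
  inf [set g t * k | t in A] = inf [set g t | t in A] * k.
Proof.
move=> k_gt0 A0 [a lba].
have lbk : has_lbound [set g t * k | t in A].
  exists (a * k) => _ [t At <-]; rewrite ler_pM2r //.
  exact: lba (ex_intro2 _ _ t At erefl).
apply/le_anti/andP; split; last first.
  apply: le_inf_image => // t At; rewrite ler_pM2r //.
  exact: inf_le_image (ex_intro _ a lba) At.
rewrite -ler_pdivrMr //; apply: le_inf_image => // t At.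
by rewrite ler_pdivrMr //; exact: inf_le_image lbk At.
Qed.

End image_sup_inf.

Section substitution.
Context {L : sig}.

Lemma t_subst_env_closed (e : nat -> nat) (t : term L) : closed_term (t_subst_env e t).
Proof. by elim: t => [n|n|f a IH] x //= [i]; apply: IH. Qed.

Lemma a_subst_env_sentence (e : nat -> nat) (a : atomic L) :
  atomic_sentence (a_subst_env e a).
Proof. by case: a => [P ts|t1 t2] x /= => [[i]|[]]; apply: t_subst_env_closed. Qed.

Lemma upd_upd_eq (e : nat -> nat) x c c' : upd (upd e x c) x c' = upd e x c'.
Proof. by apply: funext => n; rewrite /upd; case: eqP. Qed.

Lemma upd_updC (e : nat -> nat) x y c c' : y <> x ->
  upd (upd e x c) y c' = upd (upd e y c') x c.
Proof.
move=> yx; apply: funext => n; rewrite /upd.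
by case: (n =P y) => [->|]; case: (_ =P x) => // ->.
Qed.

Lemma t_subst_env_subst (e : nat -> nat) x c (t : term L) :
  t_subst_env e (t_subst x (Cst c) t) = t_subst_env (upd e x c) t.
Proof.
elim: t => [n|n|f a IH] //=; first by rewrite /upd; case: (n == x).
by congr App; apply: funext => i; apply: IH.
Qed.

Lemma a_subst_env_subst (e : nat -> nat) x c (a : atomic L) :
  a_subst_env e (a_subst x (Cst c) a) = a_subst_env (upd e x c) a.
Proof.
case: a => [P ts|t1 t2] /=; last by rewrite !t_subst_env_subst.
by congr AtP; apply: funext => i; apply: t_subst_env_subst.
Qed.

End substitution.

Section forcing_values.
Context {R : realType} {L : csig R} {FP : forcing L}.
Implicit Types (p q r : cond FP) (phi psi : formula L).

Lemma below_refl q : below q q.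
Proof. exact: Defs.le_refl. Qed.

Lemma below_neq0 q : below q !=set0.
Proof. by exists q; apply: below_refl. Qed.

Lemma Fenv_itv phi e p : 0 <= Fenv phi e p <= 1.
Proof.
elim: phi e p => [a|psi IH|psi IH|psi IH chi IH'|Phi IH|x psi IH] e p /=.
- exact/fval_range/a_subst_env_sentence.
- have := inf_image_itv (below_neq0 p) (IH e); lra.
- have := IH e p; lra.
- have := IH e p; have := IH' e p.
  by case: (leP (Fenv psi e p + Fenv chi e p) 1) => ?; lra.
- exact: inf_image_itv (ex_intro _ 0%N I) (fun n => IH n e p).
- exact: inf_image_itv (ex_intro _ 0%N I) (fun c => IH (upd e x c) p).
Qed.

Lemma Fenv_ge0 phi e p : 0 <= Fenv phi e p.
Proof. by have /andP[] := Fenv_itv phi e p. Qed.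

Lemma Fenv_le1 phi e p : Fenv phi e p <= 1.
Proof. by have /andP[] := Fenv_itv phi e p. Qed.

Lemma Fenv_mono phi e p q : le q p -> Fenv phi e q <= Fenv phi e p.
Proof.
elim: phi e p q => [a|psi IH|psi IH|psi IH chi IH'|Phi IH|x psi IH] e p q qp /=.
- exact/fval_mono/qp/a_subst_env_sentence.
- suff : inf [set Fenv psi e r | r in below p] <= inf [set Fenv psi e r | r in below q]
    by lra.
  apply: le_inf_image (below_neq0 q) _ => r rq.
  apply: (inf_le_image (A := below p)); last exact: Defs.le_trans rq qp.
  exact: has_lbound_image (fun r _ => Fenv_ge0 psi e r).
- have := IH e p q qp; lra.
- have := IH e p q qp; have := IH' e p q qp.
  by case: (leP (Fenv psi e p + Fenv chi e p) 1) => ?;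
     case: (leP (Fenv psi e q + Fenv chi e q) 1) => ?; lra.
- apply: le_inf_image (ex_intro _ 0%N I) _ => n _.
  apply: le_trans (IH n e p q qp).
  by apply: (inf_le_image (g := fun m => Fenv (Phi m) e q)) => //;
     exact: has_lbound_image (fun m _ => Fenv_ge0 (Phi m) e q).
- apply: le_inf_image (ex_intro _ 0%N I) _ => c _.
  apply: le_trans (IH (upd e x c) p q qp).
  by apply: (inf_le_image (g := fun c' => Fenv psi (upd e x c') q)) => //;
     exact: has_lbound_image (fun c' _ => Fenv_ge0 psi (upd e x c') q).
Qed.

Lemma Fenv_subst x c phi e :
  Fenv (FP:=FP) (f_subst x (Cst c) phi) e = Fenv phi (upd e x c).
Proof.
elim: phi e => [a|psi IH|psi IH|psi IH chi IH'|Phi IH|y psi IH] e /=;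
  apply: funext => p.
- by rewrite a_subst_env_subst.
- by rewrite IH.
- by rewrite IH.
- by rewrite IH IH'.
- by congr inf; apply: eq_imagel => n _; rewrite IH.
- case: eqP => [->|yx] /=; congr inf; apply: eq_imagel => c' _.
    by rewrite upd_upd_eq.
  by rewrite IH (upd_updC _ _ _ yx).
Qed.

End forcing_values.

Section weak_forcing.
Context {R : realType} {L : csig R} {FP : forcing L}.
Implicit Types (p q r : cond FP) (phi psi : formula L) (m : R).

Definition Fbelow q phi : R := inf [set F r phi | r in below q].

Lemma F_ge0 q phi : 0 <= F q phi. Proof. exact: Fenv_ge0. Qed.

Lemma F_le1 q phi : F q phi <= 1. Proof. exact: Fenv_le1. Qed.

Lemma F_mono phi q r : le r q -> F r phi <= F q phi.
Proof. exact: Fenv_mono. Qed.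

Lemma Fbelow_le_F phi q r : le r q -> Fbelow q phi <= F r phi.
Proof.
move=> rq; apply: (inf_le_image (A := below q)) rq.
exact: has_lbound_image (fun r _ => F_ge0 r phi).
Qed.

Lemma Fbelow_itv q phi : 0 <= Fbelow q phi <= 1.
Proof. by apply: inf_image_itv (below_neq0 q) _ => r; rewrite F_ge0 F_le1. Qed.

Lemma Fw_itv q phi : 0 <= Fw q phi <= 1.
Proof. exact: (sup_image_itv (g := Fbelow^~ phi)) (below_neq0 q) (Fbelow_itv^~ phi). Qed.

Lemma Fw_ge0 q phi : 0 <= Fw q phi.
Proof. by have /andP[] := Fw_itv q phi. Qed.

Lemma Fbelow_le_Fw phi q r : le r q -> Fbelow r phi <= Fw q phi.
Proof.
move=> rq; apply: (image_le_sup (A := below q) (g := Fbelow^~ phi)) rq.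
by apply: (has_ubound_image (b := 1)) => s _; have /andP[] := Fbelow_itv s phi.
Qed.

Lemma Fw_le_F phi q : Fw q phi <= F q phi.
Proof.
apply: ge_sup_image (below_neq0 q) _ => r rq.
exact: le_trans (Fbelow_le_F phi (below_refl r)) (F_mono phi rq).
Qed.

Lemma Fw_mono phi q r : le r q -> Fw r phi <= Fw q phi.
Proof.
move=> rq; apply: ge_sup_image (below_neq0 r) _ => s sr.
exact: Fbelow_le_Fw (Defs.le_trans sr rq).
Qed.

Lemma lb_le_Fw phi q m : (forall r, le r q -> m <= F r phi) -> m <= Fw q phi.
Proof.
move=> mF; apply: le_trans (Fbelow_le_Fw phi (below_refl q)).
exact: le_inf_image (below_neq0 q) mF.
Qed.

(* Below each [r], [psi] is given the share [m - F r phi] of the bound. *)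
Lemma lb_le_Fw_add phi psi q m : (forall r, le r q -> m <= F r phi + F r psi) ->
  m <= Fw q phi + Fw q psi.
Proof.
move=> mF; suff : m - Fw q psi <= Fw q phi by lra.
apply: lb_le_Fw => r rq.
suff : m - F r phi <= Fw q psi by lra.
apply: le_trans (Fw_mono psi rq); apply: lb_le_Fw => s sr.
have := mF s (Defs.le_trans sr rq); have := F_mono phi sr; lra.
Qed.

Lemma inf_below_min_add_Fw phi psi q :
  inf [set Num.min (F r phi + F r psi) 1 | r in below q] =
  inf [set Num.min (Fw r phi + Fw r psi) 1 | r in below q].
Proof.
set m := inf [set Num.min (F r phi + F r psi) 1 | r in below q].
have m_le r : le r q -> m <= Num.min (F r phi + F r psi) 1.
  apply: (inf_le_image (A := below q)); apply: (has_lbound_image (a := 0)) => s _.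
  by rewrite le_min addr_ge0 ?F_ge0 ?ler01.
apply/le_anti/andP; split.
  apply: le_inf_image (below_neq0 q) _ => r rq; rewrite le_min; apply/andP; split.
    apply: lb_le_Fw_add => s sr.
    by move: (m_le s (Defs.le_trans sr rq)); rewrite le_min => /andP[].
  by move: (m_le q (below_refl q)); rewrite le_min => /andP[].
apply: le_inf_image (below_neq0 q) _ => r rq.
apply: le_trans (inf_le_image _ rq) _.
  by apply: (has_lbound_image (a := 0)) => s _; rewrite le_min addr_ge0 ?Fw_ge0 ?ler01.
by rewrite le_min !ge_min lexx orbT andbT lerD ?Fw_le_F.
Qed.

Lemma inf_below_inf_Fw (I : Type) (i0 : I) (G : I -> formula L) q :
  inf [set inf [set F r (G i) | i in [set: I]] | r in below q] =
  inf [set inf [set Fw r (G i) | i in [set: I]] | r in below q].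
Proof.
have I_neq0 : [set: I] !=set0 by exists i0.
pose FG r := inf [set F r (G i) | i in [set: I]].
pose FwG r := inf [set Fw r (G i) | i in [set: I]].
have FG_le r i : FG r <= F r (G i).
  by apply: inf_le_image => //; apply: (has_lbound_image (a := 0)) => j _; exact: F_ge0.
have FwG_le r i : FwG r <= Fw r (G i).
  by apply: inf_le_image => //; apply: (has_lbound_image (a := 0)) => j _; exact: Fw_ge0.
have lbFG : has_lbound [set FG r | r in below q].
  apply: (has_lbound_image (a := 0)) => r _.
  by apply: le_inf_image I_neq0 _ => i _; exact: F_ge0.
have lbFwG : has_lbound [set FwG r | r in below q].
  apply: (has_lbound_image (a := 0)) => r _.
  by apply: le_inf_image I_neq0 _ => i _; exact: Fw_ge0.
change (inf [set FG r | r in below q] = inf [set FwG r | r in below q]).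
apply/le_anti/andP; split.
  apply: le_inf_image (below_neq0 q) _ => r rq.
  apply: le_inf_image I_neq0 _ => i _; apply: lb_le_Fw => s sr.
  exact: le_trans (inf_le_image lbFG (Defs.le_trans sr rq)) (FG_le s i).
apply: le_inf_image (below_neq0 q) _ => r rq.
apply: le_trans (inf_le_image lbFwG rq) _.
apply: le_inf_image I_neq0 _ => i _.
exact: le_trans (FwG_le r i) (Fw_le_F (G i) r).
Qed.

Lemma Fw_FNeg phi p : Fw p (FNeg phi) = 1 - inf [set Fw q phi | q in below p].
Proof.
have -> : Fw p (FNeg phi) = sup [set 1 - Fw q phi | q in below p].
  congr sup; apply: eq_imagel => q _.
  apply: (inf_image_subr (g := Fbelow^~ phi) 1 (below_neq0 q)).
  by apply: (has_ubound_image (b := 1)) => r _; have /andP[] := Fbelow_itv r phi.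
apply: sup_image_subr (below_neq0 p) _.
by apply: (has_lbound_image (a := 0)) => q _; exact: Fw_ge0.
Qed.

Lemma Fw_FHalf phi p : Fw p (FHalf phi) = Fw p phi / 2.
Proof.
have half_gt0 : 0 < 2^-1 :> R by rewrite invr_gt0 ltr0n.
have -> : Fw p (FHalf phi) = sup [set Fbelow q phi / 2 | q in below p].
  congr sup; apply: eq_imagel => q _.
  change (inf [set F r phi / 2 | r in below q] = Fbelow q phi / 2).
  apply: inf_image_mulr half_gt0 (below_neq0 q) _.
  by apply: (has_lbound_image (a := 0)) => r _; exact: F_ge0.
apply: (sup_image_mulr (g := Fbelow^~ phi)) half_gt0 (below_neq0 p) _.
by apply: (has_ubound_image (b := 1)) => q _; have /andP[] := Fbelow_itv q phi.
Qed.

Lemma Fw_FDplus phi psi p : Fw p (FDplus phi psi) =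
  sup [set inf [set Num.min (Fw r phi + Fw r psi) 1 | r in below q] | q in below p].
Proof. by congr sup; apply: eq_imagel => q _; exact: inf_below_min_add_Fw. Qed.

Lemma Fw_FConj Phi p : Fw p (FConj Phi) =
  sup [set inf [set inf [set Fw r (Phi n) | n in [set: nat]] | r in below q]
      | q in below p].
Proof. by congr sup; apply: eq_imagel => q _; exact: inf_below_inf_Fw 0%N Phi q. Qed.

Lemma F_FInf x phi q :
  F q (FInf x phi) = inf [set F q (f_subst x (Cst c) phi) | c in [set: nat]].
Proof. by congr inf; apply: eq_imagel => c _; rewrite /F Fenv_subst. Qed.

Lemma Fw_FInf x phi p : Fw p (FInf x phi) =
  sup [set inf [set inf [set Fw r (f_subst x (Cst c) phi) | c in [set: nat]]
               | r in below q] | q in below p].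
Proof.
congr sup; apply: eq_imagel => q _; rewrite -inf_below_inf_Fw //.
by congr inf; apply: eq_imagel => r _; exact: F_FInf.
Qed.

End weak_forcing.

Theorem proposition2p9 (R : realType) (L : csig R) (FP : forcing L) (p : cond FP) :
  (forall phi : formula L, sentence (FNeg phi) ->
     Fw p (FNeg phi) = 1 - inf [set Fw q phi | q in below p]) /\
  (forall phi : formula L, sentence (FHalf phi) ->
     Fw p (FHalf phi) = Fw p phi / 2) /\
  (forall phi psi : formula L, sentence (FDplus phi psi) ->
     Fw p (FDplus phi psi) =
     sup [set inf [set Num.min (Fw q' phi + Fw q' psi) 1 | q' in below q]
         | q in below p]) /\
  (forall Phi : nat -> formula L, sentence (FConj Phi) ->
     Fw p (FConj Phi) =
     sup [set inf [set inf [set Fw q' (Phi n) | n in [set: nat]] | q' in below q]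
         | q in below p]) /\
  (forall (x : nat) (phi : formula L), sentence (FInf x phi) ->
     Fw p (FInf x phi) =
     sup [set inf [set inf [set Fw q' (f_subst x (Cst c) phi) | c in [set: nat]]
                  | q' in below q]
         | q in below p]).
Proof.
split; first by move=> phi _; exact: Fw_FNeg.
split; first by move=> phi _; exact: Fw_FHalf.
split; first by move=> phi psi _; exact: Fw_FDplus.
split; first by move=> Phi _; exact: Fw_FConj.
by move=> x phi _; exact: Fw_FInf.
Qed.
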